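(* Let $p$ be a prime and $G$ a finite $p$-group with $|G'\cap Z(G)|=p$ and $|G'|=p^2$. Then $Z(G)^*\cap Z(C_G(G'))=G'Z(G)$.
   Context: $G'$ is the commutator subgroup, $Z(\cdot)$ the center, $C_G(G')$ the centralizer of $G'$ in $G$. Commutators are $[x,y]=xyx^{-1}y^{-1}$; for $x\in G$, $[G,x]=\{[y,x]: y\in G\}$; and $Z(G)^*=\{x\in G : [G,x]\subseteq Z(G)\}$. *)

From mathcomp Require Import all_boot all_fingroup all_solvable.
Set Implicit Arguments. Unset Strict Implicit. Unset Printing Implicit Defensive.
Local Open Scope group_scope.

(* Paper's commutator convention: [x,y] = x y x^-1 y^-1. *)
Definition pcomm (gT : finGroupType) (x y : gT) : gT := x * y * x^-1 * y^-1.

Definition Zstar (gT : finGroupType) (G : {set gT}) : {set gT} :=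
  [set x in G | [forall y in G, pcomm y x \in 'Z(G)]].

From mathcomp Require Import all_boot all_fingroup all_solvable.
Set Implicit Arguments. Unset Strict Implicit. Unset Printing Implicit Defensive.
Local Open Scope group_scope.

(* Write D = G', Z = Z(G) and C = C_G(D).  Since D has order p^2 it is
   abelian and [D, G] is a proper normal subgroup of D, hence central; thus
   D Z lies in Z(G)^* and, clearly, in Z(C).  Conversely, pick g in D and y in
   G with c = [g, y] <> 1; then D :&: Z = <c>.  For any y' in G we have
   [g, y'] = c^j = [g, y^j], so y' y^-j centralizes g and N = D :&: Z, which
   generate D as N is maximal in D: hence G = C <y>.  Now if x lies in
   Z(G)^* :&: Z(C), then [x, y] = c^k = [g^k, y], so w = x g^-k commutes with
   y and (being in Z(C)) with C, i.e. w is central and x = w g^k is in D Z. *)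

Section Commutators.
Variable gT : finGroupType.
Implicit Types (x y z : gT) (G H K : {group gT}).

Lemma pcommE x y : pcomm y x = [~ x, y^-1] ^ x^-1.
Proof. by rewrite /pcomm /commg /conjg !invgK !mulgA mulgV mul1g. Qed.

Lemma ZstarP G x :
  reflect (x \in G /\ {in G, forall y, [~ x, y] \in 'Z(G)}) (x \in Zstar G).
Proof.
have nZG := normal_norm (center_normal G).
apply: (iffP setIdP) => [[Gx /forall_inP ZxG] | [Gx ZxG]]; split=> //.
  move=> y Gy; have := ZxG _ (groupVr Gy).
  by rewrite pcommE invgK memJ_norm // (subsetP nZG) ?groupV.
apply/forall_inP => y Gy.
by rewrite pcommE memJ_norm ?ZxG ?groupV ?(subsetP nZG).
Qed.

Lemma commg_eq_cent1r x y z : [~ x, y] = [~ x, z] -> y * z^-1 \in 'C[x].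
Proof.
rewrite !commgEl => /mulgI exy; apply/cent1P; apply/commute_sym.
by apply/commgP/conjg_fixP; rewrite conjgM exy conjgK.
Qed.

Lemma commg_eq_cent1l x y z : [~ x, y] = [~ z, y] -> x * z^-1 \in 'C[y].
Proof. by move=> exz; apply: commg_eq_cent1r; rewrite -invgR exz invgR. Qed.

Lemma normal_prime_sub_center G K :
  nilpotent G -> K <| G -> prime #|K| -> K \subset 'Z(G).
Proof.
move=> nilG nsKG prK; have [// | tiKZ] := prime_subgroupVti 'Z(G) prK.
by move: prK; rewrite (TI_center_nil nilG nsKG) ?cards1 // setIC.
Qed.

Lemma comm_p2group_sub_center p G H :
    prime p -> p.-group G -> H <| G -> #|H| = (p ^ 2)%N ->
  [~: H, G] \subset 'Z(G).
Proof.
move=> prp pG nsHG oH; have [sHG nHG] := andP nsHG.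
have ntH : H :!=: 1 by rewrite trivg_card1 oH (eqn_exp2l 2 0 (prime_gt1 prp)).
have nHGG : G \subset 'N_G(H) by rewrite subsetI subxx.
have ltRH := nil_comm_properl (pgroup_nil pG) sHG ntH nHGG.
have sRH := proper_sub ltRH; have:= cardSg sRH.
rewrite oH => /(dvdn_pfactor _ _ prp)[[|[|m]] _ oR].
- by rewrite (card1_trivg oR) sub1G.
- apply: normal_prime_sub_center (pgroup_nil pG) _ _; last by rewrite oR expn1.
  by rewrite /normal commg_normr (subset_trans sRH sHG).
- move: (proper_card ltRH).
  by rewrite oR oH ltn_exp2l ?prime_gt1 // ltnNge ltnS.
Qed.

Lemma abelian_sub_center_subcent G H :
  H \subset G -> abelian H -> H \subset 'Z('C_G(H)).
Proof.
by move=> sHG cHH; rewrite !subsetI sHG [X in _ && X]centsC subsetIr andbT.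
Qed.

Lemma center_sub_center_subcent G H : H \subset G -> 'Z(G) \subset 'Z('C_G(H)).
Proof.
move=> sHG; have cGZ : G \subset 'C('Z(G)) by rewrite centsC subsetIr.
rewrite !subsetI center_sub (subset_trans (subsetIr _ _)) ?centS //.
by rewrite centsC (subset_trans (subsetIl _ _)).
Qed.

Lemma mul_center_sub_Zstar G H :
  H \subset G -> [~: H, G] \subset 'Z(G) -> H * 'Z(G) \subset Zstar G.
Proof.
move=> sHG sRZ; apply/subsetP => _ /mulsgP[h z Hh Zz ->].
have [Gz cGz] := setIP Zz; have Gh := subsetP sHG h Hh.
apply/ZstarP; split=> [|y Gy]; first by rewrite groupM.
have /commgP/eqP cyz := centP cGz y Gy.
have nZG := normal_norm (center_normal G).
by rewrite commMgJ cyz mulg1 memJ_norm ?(subsetP nZG) ?(subsetP sRZ) ?mem_commg.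
Qed.

End Commutators.

Section DerivedOfOrderP2.
Variables (gT : finGroupType) (p : nat) (G : {group gT}).
Hypotheses (prp : prime p) (pG : p.-group G).
Hypotheses (oDZ : #|G^`(1) :&: 'Z(G)| = p) (oD : #|G^`(1)| = (p ^ 2)%N).

Lemma commg_der1_sub : [~: G^`(1), G] \subset G^`(1) :&: 'Z(G).
Proof.
rewrite subsetI commg_subl (normal_norm (der_normal 1 G)).
exact: comm_p2group_sub_center prp pG (der_normal 1 G) oD.
Qed.

Lemma exists_der1_noncommuting :
  exists g y, [/\ g \in G^`(1), y \in G & [~ g, y] != 1].
Proof.
have : ~~ (G^`(1) \subset 'Z(G)).
  apply/negP => /setIidPl eDZ; move/eqP: oDZ.
  by rewrite eDZ oD -{2}(expn1 p) eqn_exp2l ?prime_gt1.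
case/subsetPn => g Dg; rewrite inE (subsetP (der_sub 1 G)) //= -sub_cent1.
case/subsetPn => y Gy ngy; exists g, y; split=> //.
by apply: contra ngy => /commgP cgy; apply/cent1P/commute_sym.
Qed.

Lemma commg_der1_mem d t :
  d \in G^`(1) -> t \in G -> [~ d, t] \in G^`(1) :&: 'Z(G).
Proof. by move=> Dd Gt; rewrite (subsetP commg_der1_sub) ?mem_commg. Qed.

Lemma commute_commg_der1 d t z :
  d \in G^`(1) -> t \in G -> z \in G -> commute z [~ d, t].
Proof.
move=> Dd Gt Gz; have /setIP[_ /centerP[_ cGc]] := commg_der1_mem Dd Gt.
exact/commute_sym/cGc.
Qed.

Section NoncommutingPair.
Variables g y : gT.
Hypotheses (Dg : g \in G^`(1)) (Gy : y \in G) (ngy : [~ g, y] != 1).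

Lemma der1_meet_center_cycle : G^`(1) :&: 'Z(G) = <[ [~ g, y] ]>.
Proof.
have Nc := commg_der1_mem Dg Gy.
apply/eqP; rewrite eqEsubset cycle_subG Nc andbT prime_meetG ?oDZ //.
by rewrite (setIidPr _) ?cycle_subG ?cycle_eq1.
Qed.

Lemma g_not_central : g \notin 'Z(G).
Proof. by apply: contra ngy => /centerP[_ cGg]; apply/commgP/cGg. Qed.

Lemma subcent1_sub_cent_der1 : 'C_G[g] \subset 'C_G(G^`(1)).
Proof.
have sND : G^`(1) :&: 'Z(G) \subset G^`(1) := subsetIl _ _.
have iND : #|G^`(1) : G^`(1) :&: 'Z(G)| = p.
  apply/eqP; rewrite -(eqn_pmul2l (prime_gt0 prp)) -{1}oDZ Lagrange //.
  by rewrite oD mulnn.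
have /maximal_eqP[_ maxN] : maximal_eq (G^`(1) :&: 'Z(G)) G^`(1).
  by rewrite /maximal_eq p_index_maximal ?iND ?orbT.
apply/subsetP => t /setIP[Gt /cent1P cgt]; rewrite inE Gt /= -sub_cent1.
have sNC : G^`(1) :&: 'Z(G) \subset 'C_(G^`(1))[t].
  rewrite subsetI sND sub_cent1 (subsetP _ t Gt) //.
  by rewrite centsC (subset_trans (subsetIr _ _)) // subsetIr.
case: (maxN _ sNC (subsetIl _ _)) => [eCN | eCD]; last by rewrite -eCD subsetIr.
have : g \in 'C_(G^`(1))[t] by rewrite inE Dg; apply/cent1P.
by rewrite eCN => /setIP[_ Zg]; case/negP: g_not_central.
Qed.

Lemma mul_subcent_cycle : 'C_G(G^`(1)) * <[y]> = G.
Proof.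
apply/eqP; rewrite eqEsubset mul_subG ?subsetIl ?cycle_subG //.
apply/subsetP => z Gz; have := commg_der1_mem Dg Gz.
rewrite der1_meet_center_cycle => /cycleP[j ez].
rewrite -(mulgKV (y ^+ j) z) mem_mulg ?mem_cycle //.
apply: (subsetP subcent1_sub_cent_der1); rewrite inE groupM ?groupV ?groupX //=.
by apply: commg_eq_cent1r; rewrite ez (commgX _ (commute_commg_der1 Dg Gy Gy)).
Qed.

Lemma Zstar_meet_center_subcent_sub :
  Zstar G :&: 'Z('C_G(G^`(1))) \subset G^`(1) * 'Z(G).
Proof.
have sDG := der_sub 1 G; have Gg := subsetP sDG g Dg.
have ZCg : g \in 'Z('C_G(G^`(1))).
  apply: subsetP Dg.
  by rewrite abelian_sub_center_subcent ?(card_p2group_abelian prp).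
apply/subsetP => x /setIP[/ZstarP[Gx ZxG] ZCx].
have /cycleP[k exy] : [~ x, y] \in <[ [~ g, y] ]>.
  by rewrite -der1_meet_center_cycle inE ZxG ?andbT ?mem_commg.
pose w : gT := x * (g ^+ k)^-1.
have ZCw : w \in 'Z('C_G(G^`(1))) by rewrite groupM ?groupV ?groupX.
have Zw : w \in 'Z(G).
  have [_ cCw] := setIP ZCw.
  rewrite inE groupM ?groupV ?groupX //= -sub_cent1 -{1}mul_subcent_cycle.
  rewrite mul_subG ?sub_cent1 ?cent_cycle //.
  rewrite /w; apply: commg_eq_cent1l.
  by rewrite exy (commXg _ (commute_commg_der1 Dg Gy Gg)).
have /centerP[_ cGw] := Zw.
have ->: x = g ^+ k * w by rewrite -(cGw _ (groupX k Gg)) mulgKV.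
by rewrite mem_mulg ?groupX.
Qed.

End NoncommutingPair.
End DerivedOfOrderP2.

Theorem lemma3p4 (gT : finGroupType) (p : nat) (G : {group gT}) :
  prime p -> p.-group G ->
  #|G^`(1) :&: 'Z(G)| = p -> #|G^`(1)| = (p ^ 2)%N ->
  Zstar G :&: 'Z('C_G(G^`(1))) = G^`(1) * 'Z(G).
Proof.
move=> prp pG oDZ oD; have sDG := der_sub 1 G.
have [g [y [Dg Gy ngy]]] := exists_der1_noncommuting prp oDZ oD.
apply/eqP; rewrite eqEsubset.
rewrite (Zstar_meet_center_subcent_sub prp pG oDZ oD Dg Gy ngy).
have sRZ := subset_trans (commg_der1_sub prp pG oD) (subsetIr _ _).
rewrite subsetI mul_center_sub_Zstar //.
rewrite mul_subG ?center_sub_center_subcent //.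
by rewrite abelian_sub_center_subcent ?(card_p2group_abelian prp).
Qed.
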